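(* Let $V$ be an $\hbar$-adic nonlocal vertex algebra and let $u,v\in V$, $c^{(r)}\in V$ ($r\in\mathbb N$) with $\lim_{r\to\infty}c^{(r)}=0$ $\hbar$-adically, and $\beta(x),f(x),g(x)\in\mathbb{C}((x))[[\hbar]]$, such that $$Y(u,x_1)Y(v,x_2)-\beta(x_2-x_1)Y(v,x_2)Y(u,x_1)=f(x_1-x_2)+g(x_2-x_1)+\sum_{r\ge0}Y(c^{(r)},x_2)\frac{1}{r!}\Big(\frac{\partial}{\partial x_2}\Big)^rx_1^{-1}\delta\Big(\frac{x_2}{x_1}\Big).$$ Then $$Y(u,x_1)Y(v,x_2)\sim\beta(x_2-x_1)Y(v,x_2)Y(u,x_1)+f(-x_2+x_1)+g(x_2-x_1)$$ and $$Y(u,x)^-v=f(x)^-{\bf 1}+\sum_{r\ge0}c^{(r)}x^{-r-1}.$$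
   Context: An $\hbar$-adic nonlocal vertex algebra is a topologically free $\mathbb{C}[[\hbar]]$-module $V$ (i.e. isomorphic to $V_0[[\hbar]]$) with ${\bf 1}\in V$ and a $\mathbb{C}[[\hbar]]$-linear $Y(\cdot,x):V\to(\mathrm{End}V)[[x^{\pm1}]]$, $Y(v,x)=\sum v_nx^{-n-1}$, such that reductions mod $\hbar^n$ of $Y(u,x)w$ lie in $(V/\hbar^nV)((x))$, $Y({\bf 1},x)=1$, $Y(v,x){\bf 1}\in V[[x]]$ with constant term $v$, and for $u,v,w$ and each $n\ge1$ there is $l$ with $(z+y)^lY(u,z+y)Y(v,y)w\equiv(z+y)^lY(Y(u,z)v,y)w$ mod $\hbar^nV[[z^{\pm1},y^{\pm1}]]$. Conventions: $\delta(x)=\sum_{n\in\mathbb Z}x^n$; a scalar series $h(x)$ placed in an operator identity means $h\cdot\mathrm{id}_V$; $f(x_1-x_2)$ is expanded in nonnegative powers of $x_2$, while $f(-x_2+x_1)$, $g(x_2-x_1)$ and $\beta(x_2-x_1)$ are expanded in nonnegative powers of $x_1$. For $F,G\in(\mathrm{End}V)[[x_1^{\pm1},x_2^{\pm1}]]$, $F\sim G$ means: for every $n\ge1$ there is $k\ge0$ with $(x_1-x_2)^kF\equiv(x_1-x_2)^kG$ modulo $\hbar^n(\mathrm{End}V)[[x_1^{\pm1},x_2^{\pm1}]]$. $Y(u,x)^-=\sum_{n\ge0}u_nx^{-n-1}$ and, for $f(x)=\sum_nf_nx^n\in\mathbb{C}((x))[[\hbar]]$, $f(x)^-=\sum_{n<0}f_nx^n$.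 *)

(* Scalars: C = R[i] (complex numbers over a realType R),
   hbar-adic modules modelled as V0[[hbar]] = nat -> V0. *)
From Stdlib Require Import ClassicalEpsilon.
From mathcomp Require Import all_boot all_order all_algebra.
From mathcomp Require Import reals.
From mathcomp Require Export complex.

Set Implicit Arguments.
Unset Strict Implicit.
Unset Printing Implicit Defensive.

Import Order.TTheory GRing.Theory Num.Theory.
Local Open Scope ring_scope.

(* generalized binomial coefficient  binom(n, r) for n : int *)
Definition zbin (n : int) (r : nat) : int :=
  match n with
  | Posz m => ('C(m, r))%:Z
  | Negz m => (-1) ^+ r * ('C(m + r, r))%:Z
  end.

Section HbarAdic.
Variables (K : fieldType) (V0 : lmodType K).

(* C[[hbar]] : coefficient j of hbar^j *)
Definition hser := nat -> K.
(* V = V0[[hbar]] (topologically free) : coefficient m of hbar^m *)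
Definition hvec := nat -> V0.

Definition hzero : hvec := fun _ => 0.
Definition hadd (v w : hvec) : hvec := fun m => v m + w m.
Definition hsub (v w : hvec) : hvec := fun m => v m - w m.
Definition hscale (a : hser) (v : hvec) : hvec :=
  fun m => \sum_(i < m.+1) a i *: v (m - i)%N.
Definition kscale (c : K) (v : hvec) : hvec := fun m => c *: v m.

(* v \in hbar^N V *)
Definition modh (N : nat) (v : hvec) : Prop := forall m, (m < N)%N -> v m = 0.
Definition hcong (N : nat) (v w : hvec) : Prop := forall m, (m < N)%N -> v m = w m.

Definition hlim0 (c : nat -> hvec) : Prop :=
  forall N : nat, exists r0 : nat, forall r, (r0 <= r)%N -> modh N (c r).

(* A family s is
   hbar-adically summable iff each hbar-coefficient has finite support;
   the sum is then computed coefficientwise (junk value otherwise). *)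
Definition hsumZ (s : int -> hvec) : hvec := fun m =>
  epsilon (inhabits (0 : V0)) (fun t => exists N : nat,
     (forall i : int, (N < `|i|)%N -> s i m = 0) /\
     t = \sum_(i < N.*2.+1) s (i%:Z - N%:Z) m).

Definition hsumN (s : nat -> hvec) : hvec :=
  hsumZ (fun i : int => match i with Posz r => s r | Negz _ => hzero end).

Definition hlinear (F : hvec -> hvec) : Prop :=
  (forall v w, F (hadd v w) = hadd (F v) (F w)) /\
  (forall a v, F (hscale a v) = hscale a (F v)).

(* Vertex operator Y(v,x) = sum_n v_n x^{-n-1} is encoded as Y v n = v_n. *)
Definition vop := hvec -> int -> hvec -> hvec.

(* coefficient of z^a y^b in Y(u,z+y) Y(v,y) w, (z+y)^{-n-1} expanded in
   nonnegative powers of y *)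
Definition YzyY (Y : vop) (u v w : hvec) (a b : int) : hvec :=
  hsumZ (fun j : int => if (0 <= j)%R then
     kscale ((zbin (a + j) `|j|)%:~R) (Y u (- a - j - 1) (Y v (j - b - 1) w))
   else hzero).

(* coefficient of z^a y^b in (z+y)^l H(z,y), H given by its coefficients *)
Definition mul_zy (l : nat) (H : int -> int -> hvec) (a b : int) : hvec :=
  fun m => \sum_(t < l.+1) ('C(l, t)%:R : K) *: H (a - (l - t)%:Z) (b - t%:Z) m.

(* coefficient of x1^a x2^b in (x1-x2)^k H(x1,x2) *)
Definition mul_x12 (k : nat) (H : int -> int -> hvec) (a b : int) : hvec :=
  fun m => \sum_(t < k.+1)
     (('C(k, t)%:R : K) * (-1) ^+ t) *: H (a - (k - t)%:Z) (b - t%:Z) m.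

Definition hNVA (vac : hvec) (Y : vop) : Prop :=
  (forall u u' n w, Y (hadd u u') n w = hadd (Y u n w) (Y u' n w)) /\
  (forall a u n w, Y (hscale a u) n w = hscale a (Y u n w)) /\
  (forall u n, hlinear (Y u n)) /\
  (* reductions mod hbar^N of Y(u,x)w lie in (V/hbar^N V)((x)) *)
  (forall u w (N : nat), exists n0 : int, forall n, n0 <= n -> modh N (Y u n w)) /\
  (forall n w, Y vac n w = if n == -1 then w else hzero) /\
  (forall v, Y v (-1) vac = v /\ forall n : int, 0 <= n -> Y v n vac = hzero) /\
  (* weak associativity *)
  (forall u v w (N : nat), exists l : nat, forall a b : int,
     hcong N (mul_zy l (YzyY Y u v w) a b)
             (mul_zy l (fun a' b' => Y (Y u (- a' - 1) v) (- b' - 1) w) a b)).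

(* Elements of C((x))[[hbar]] : phi j k = coefficient of hbar^j x^k *)
Definition lser := nat -> int -> K.
Definition is_lser (phi : lser) : Prop :=
  forall j : nat, exists L : int, forall k : int, k < L -> phi j k = 0.

Definition sgnz (b : bool) (n : int) : K := if b && odd `|n| then -1 else 1.

(* coefficient of hbar^j X^a Y^i in phi((-1)^nX X + (-1)^nY Y), expanded in
   nonnegative powers of Y *)
Definition expc (phi : lser) (nX nY : bool) (j : nat) (a i : int) : K :=
  if (0 <= i)%R then phi j (a + i) * (zbin (a + i) `|i|)%:~R * sgnz nX a * sgnz nY i
  else 0.

(* coefficient of x1^a x2^b in Y(u,x1)Y(v,x2)w *)
Definition YuYv (Y : vop) (u v w : hvec) (a b : int) : hvec :=
  Y u (- a - 1) (Y v (- b - 1) w).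

(* coefficient of x1^a x2^b in beta(x2-x1) Y(v,x2) Y(u,x1) w *)
Definition beta_term (beta : lser) (Y : vop) (u v w : hvec) (a b : int) : hvec :=
  hsumZ (fun i : int => hsumZ (fun l : int =>
    hscale (fun j => expc beta false true j l i)
           (Y v (- (b - l) - 1) (Y u (- (a - i) - 1) w)))).

(* coefficient of x1^a x2^b in f(x1-x2) w *)
Definition f_x1mx2 (f : lser) (w : hvec) (a b : int) : hvec :=
  hscale (fun j => expc f false true j a b) w.
(* coefficient of x1^a x2^b in f(-x2+x1) w *)
Definition f_mx2x1 (f : lser) (w : hvec) (a b : int) : hvec :=
  hscale (fun j => expc f true false j b a) w.
(* coefficient of x1^a x2^b in g(x2-x1) w *)
Definition g_x2mx1 (g : lser) (w : hvec) (a b : int) : hvec :=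
  hscale (fun j => expc g false true j b a) w.

(* coefficient of x1^a x2^b in
   sum_r Y(c^(r),x2) 1/r! (d/dx2)^r x1^{-1} delta(x2/x1) w *)
Definition delta_term (Y : vop) (c : nat -> hvec) (w : hvec) (a b : int) : hvec :=
  hsumN (fun r => kscale ((zbin (- a - 1) r)%:~R) (Y (c r) (- a - b - r%:Z - 2) w)).

(* negative part coefficient: f(x)^- has coefficient phi_k (k<0) *)
Definition lcoef (phi : lser) (k : int) : hser := fun j => phi j k.

End HbarAdic.

(* Everything is read off coefficientwise from the commutator formula.
   Against the vacuum, its coefficient of x1^(-n-1) x2^0 is the second claim:
   Y(u,x1)1, beta(x2-x1) and g(x2-x1) only involve nonnegative powers of x1,
   f(x1-x2) contributes f_(-n-1), and since Y(c^(r),x2)1 has constant term c^(r)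
   the delta sum contributes exactly c^(n).
   For the first claim, the two sides differ by f(x1-x2) - f(-x2+x1) plus the
   delta sum. Multiplying the two expansions of (x1-x2)^n by (x1-x2)^k gives
   the two expansions of (x1-x2)^(n+k), which agree once n + k >= 0, and
   (x1-x2)^k kills the r-th derivative of the delta function once r < k.
   Modulo hbar^N only the f_n with n >= -M and the c^(r) with r < r0 survive,
   so k = r0 + M works. *)

From mathcomp Require Import all_boot all_order all_algebra.
From mathcomp Require Import reals complex.
From Stdlib Require Import ClassicalEpsilon FunctionalExtensionality.
From mathcomp Require Import zify ring.
Import GRing.Theory Num.Theory.

Set Implicit Arguments.
Unset Strict Implicit.
Unset Printing Implicit Defensive.
Local Open Scope ring_scope.

(* A family H : int -> int -> W stands for the series sum of H a b x1^a x2^b;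
   [mulX12 k] and [diffX12] multiply it by (x1 - x2)^k and by x1 - x2. *)
Section MulX12.
Variables (K : fieldType) (W : lmodType K).
Implicit Types (H : int -> int -> W) (a b : int) (k : nat).

Definition mulX12 k H a b : W :=
  \sum_(t < k.+1) (('C(k, t)%:R : K) * (-1) ^+ t) *: H (a - (k - t)%:Z) (b - t%:Z).

Definition diffX12 H a b : W := H (a - 1) b - H a (b - 1).

Lemma eq_mulX12 k H1 H2 a b : H1 =2 H2 -> mulX12 k H1 a b = mulX12 k H2 a b.
Proof. by move=> eH; apply: eq_bigr => t _; rewrite eH. Qed.

Lemma mulX12D k H1 H2 a b :
  mulX12 k (fun a b => H1 a b + H2 a b) a b = mulX12 k H1 a b + mulX12 k H2 a b.
Proof. by rewrite -big_split; apply: eq_bigr => t _; rewrite scalerDr. Qed.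

Lemma mulX12N k H a b : mulX12 k (fun a b => - H a b) a b = - mulX12 k H a b.
Proof. by rewrite -sumrN; apply: eq_bigr => t _; rewrite scalerN. Qed.

Lemma mulX12_sum k n (F : 'I_n -> int -> int -> W) a b :
  mulX12 k (fun a b => \sum_(i < n) F i a b) a b = \sum_(i < n) mulX12 k (F i) a b.
Proof. by rewrite exchange_big; apply: eq_bigr => t _; rewrite scaler_sumr. Qed.

Lemma mulX12_eq0 k H a b : H =2 (fun _ _ => 0) -> mulX12 k H a b = 0.
Proof. by move=> H0; rewrite /mulX12 big1 // => t _; rewrite H0 scaler0. Qed.

Lemma mulX120 H a b : mulX12 0 H a b = H a b.
Proof. by rewrite /mulX12 big_ord1 /= bin0 mulr1 scale1r !subr0. Qed.

(* Pascal's rule 'C(k+1, t+1) = 'C(k, t+1) + 'C(k, t). *)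
Lemma mulX12S k H a b : mulX12 k.+1 H a b = mulX12 k (diffX12 H) a b.
Proof.
rewrite /mulX12 /diffX12.
under [RHS]eq_bigr => t _ do rewrite scalerBr.
rewrite sumrB [LHS]big_ord_recl [X in _ = X - _]big_ord_recl /= /bump /=.
under eq_bigr => t _ do rewrite add1n binS natrD mulrDl scalerDl.
under [X in _ = _ + X - _]eq_bigr => t _ do rewrite add1n.
rewrite big_split /= [X in _ + (X + _)]big_ord_recr /=.
rewrite (@bin_small k k.+1) // mul0r scale0r addr0.
rewrite !bin0 !expr0 !mulr1 !scale1r -!addrA; congr (_ + (_ + _)).
- congr (H _ _); lia.
- apply: eq_bigr => t _; congr (_ *: H _ _); have := ltn_ord t; lia.
- rewrite add0r -sumrN; apply: eq_bigr => t _.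
  rewrite exprS mulN1r mulrN scaleNr; congr (- (_ *: H _ _)); lia.
Qed.

Lemma mulX12_fixed k H a b : diffX12 H =2 H -> mulX12 k H a b = H a b.
Proof.
move=> HD; elim: k a b => [|k IHk] a b; first exact: mulX120.
by rewrite mulX12S -IHk; apply: eq_mulX12.
Qed.

Lemma mulX12_lowering_eq0 (F : nat -> int -> int -> W) k r a b :
    diffX12 (F 0%N) =2 (fun _ _ => 0) -> (forall r, diffX12 (F r.+1) =2 F r) ->
  (r < k)%N -> mulX12 k (F r) a b = 0.
Proof.
move=> F0 FS; elim: k r a b => [|k IHk] [|r] a b // /[!ltnS] ltrk.
- by rewrite mulX12S; apply: mulX12_eq0.
- by rewrite mulX12S -(IHk r a b ltrk); apply: eq_mulX12.
Qed.

End MulX12.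

Lemma mul_x12E (K : fieldType) (V0 : lmodType K) k (H : int -> int -> hvec V0) a b m :
  mul_x12 k H a b m = mulX12 k (fun a b => H a b m) a b.
Proof. by []. Qed.

Lemma mulX12_scale_shift (K : fieldType) (W : lmodType K) k
    (e : int -> int -> K^o) (h : int -> W) (H : int -> int -> W) a b :
  H =2 (fun a b => e a b *: h (a + b)) ->
  mulX12 k H a b = mulX12 k e a b *: h (a + b - k%:Z).
Proof.
move=> eH; rewrite /mulX12 scaler_suml; apply: eq_bigr => t _.
rewrite eH scalerA; congr (_ *: h _); have := ltn_ord t; lia.
Qed.

Lemma zbin0 n : zbin n 0 = 1.
Proof. by case: n => m /=; rewrite ?bin0 ?addn0 ?binn ?expr0 ?mul1r. Qed.

Lemma zbinS n r : zbin (n + 1) r.+1 = zbin n r.+1 + zbin n r.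
Proof.
case: n => [m|[|m]].
- by rewrite -PoszD addn1 /= binS PoszD.
- by rewrite /= !add0n !binn exprS bin_small //; ring.
- have -> : Negz m.+1 + 1 = Negz m by rewrite !NegzE; lia.
  by rewrite /= (addSn m r) -(addnS m r) addSn binS PoszD exprS; ring.
Qed.

Section ExpansionCoefficients.
Variable K : fieldType.

Lemma sgnzS (r : nat) : sgnz K true r.+1 = - sgnz K true r.
Proof. by rewrite /sgnz /=; case: (odd r); rewrite ?opprK. Qed.

Lemma sgnzB1 (b : int) : sgnz K true (b - 1) = - sgnz K true b.
Proof.
case: b => [[|r]|r]; first by [].
- have -> : Posz r.+1 - 1 = r by lia.
  by rewrite sgnzS opprK.
- have -> : Negz r - 1 = Negz r.+1 by rewrite !NegzE; lia.
  by rewrite /sgnz /= negbK; case: (odd r); rewrite /= ?opprK.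
Qed.

(* [coef_pow12 a b] and [coef_pow21 a b] are the coefficients of x1^a x2^b in
   (x1 - x2)^(a + b), expanded in nonnegative powers of x2, resp. of x1;
   [coef_delta r a b] is that of (1/r!) (d/dx2)^r x1^-1 delta(x2/x1) when
   a + b = -r - 1. *)
Definition coef_pow12 (a b : int) : K^o :=
  if 0 <= b then (zbin (a + b) `|b|)%:~R * sgnz K true b else 0.

Definition coef_pow21 (a b : int) : K^o :=
  if 0 <= a then (zbin (a + b) `|a|)%:~R * sgnz K true b else 0.

Definition coef_delta (r : nat) (a b : int) : K^o := (zbin (- a - 1) r)%:~R.

(* Both families are the formal sum over n of (x1 - x2)^n, which
   multiplication by x1 - x2 only reindexes. *)
Lemma diffX12_coef_pow12 : diffX12 coef_pow12 =2 coef_pow12.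
Proof.
move=> a [[|r]|r]; rewrite /diffX12 /coef_pow12.
- by rewrite /= !zbin0 subr0.
- have -> : Posz r.+1 - 1 = r by lia.
  rewrite /= sgnzS.
  have -> : a + r.+1 = a + r + 1 by lia.
  have -> : a - 1 + r.+1 = a + r by lia.
  by rewrite zbinS rmorphD /=; ring.
- have -> : Negz r - 1 = Negz r.+1 by rewrite !NegzE; lia.
  by rewrite /= subrr.
Qed.

Lemma diffX12_coef_pow21 : diffX12 coef_pow21 =2 coef_pow21.
Proof.
move=> [[|r]|r] b; rewrite /diffX12 /coef_pow21.
- by rewrite /= !zbin0 sgnzB1 sub0r !mul1r opprK.
- have -> : Posz r.+1 - 1 = r by lia.
  rewrite /= sgnzB1.
  have -> : Posz r + b = r.+1%:Z + (b - 1) by lia.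
  have -> : r.+1%:Z + b = r.+1%:Z + (b - 1) + 1 by lia.
  by rewrite zbinS rmorphD /=; ring.
- by rewrite /= subrr.
Qed.

Lemma coef_pow12_21 (a b : int) : 0 <= a + b -> coef_pow12 a b = coef_pow21 a b.
Proof.
rewrite /coef_pow12 /coef_pow21; case: a => p; case: b => q ab_ge0.
- by rewrite -PoszD /= -{2}(addKn p q) bin_sub // leq_addr.
- have -> : Posz p + Negz q = Posz (p - q.+1) by rewrite NegzE; lia.
  by rewrite /= bin_small ?mulr0z ?mul0r //; move: ab_ge0; rewrite NegzE; lia.
- have -> : Negz p + Posz q = Posz (q - p.+1) by rewrite NegzE; lia.
  by rewrite /= bin_small ?mulr0z ?mul0r //; move: ab_ge0; rewrite NegzE; lia.
- by move: ab_ge0; rewrite !NegzE; lia.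
Qed.

Lemma diffX12_coef_delta0 : diffX12 (coef_delta 0) =2 (fun _ _ => 0).
Proof. by move=> a b; rewrite /diffX12 /coef_delta !zbin0 subrr. Qed.

Lemma diffX12_coef_deltaS r : diffX12 (coef_delta r.+1) =2 coef_delta r.
Proof.
move=> a b; rewrite /diffX12 /coef_delta.
have -> : - (a - 1) - 1 = (- a - 1) + 1 by lia.
by rewrite zbinS rmorphD /=; ring.
Qed.

End ExpansionCoefficients.

Section HbarAdicSums.
Variables (K : fieldType) (V0 : lmodType K).
Implicit Types (s : int -> hvec V0) (N m : nat).

Definition hsum_window s N m : V0 := \sum_(i < N.*2.+1) s (i%:Z - N%:Z) m.

Lemma hsum_windowS s N m : (forall i : int, (N < `|i|)%N -> s i m = 0) ->
  hsum_window s N.+1 m = hsum_window s N m.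
Proof.
move=> s0; rewrite /hsum_window doubleS big_ord_recl big_ord_recr /=.
rewrite !s0 ?add0r ?addr0 /bump /=; try lia.
by apply: eq_bigr => i _; congr (s _ m); rewrite /bump /=; lia.
Qed.

Lemma hsum_window_le s N N' m : (forall i : int, (N < `|i|)%N -> s i m = 0) ->
  (N <= N')%N -> hsum_window s N' m = hsum_window s N m.
Proof.
move=> s0 /subnKC <-; elim: (N' - N)%N => [|d IHd]; first by rewrite addn0.
by rewrite addnS hsum_windowS ?IHd // => i ?; apply: s0; lia.
Qed.

Lemma hsumZE s N m : (forall i : int, (N < `|i|)%N -> s i m = 0) ->
  hsumZ s m = hsum_window s N m.
Proof.
move=> s0; rewrite /hsumZ.
set P := (X in epsilon _ X).
have [N2 [s2 ->]] : P (epsilon (inhabits 0) P).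
  by apply: epsilon_spec; exists (hsum_window s N m), N.
rewrite -/(hsum_window s N2 m) -(@hsum_window_le s N2 (maxn N N2)) ?leq_maxr //.
by rewrite (@hsum_window_le s N) ?leq_maxl.
Qed.

Lemma hsumZ_eq0 s m : (forall i, s i m = 0) -> hsumZ s m = 0.
Proof. by move=> s0; rewrite (@hsumZE s 0) // /hsum_window big1. Qed.

End HbarAdicSums.

Lemma is_lser_uniform (K : fieldType) (f : lser K) : is_lser f ->
  forall N, exists M : nat, forall j, (j < N)%N -> forall n : int, n < - M%:Z -> f j n = 0.
Proof.
move=> f_lser; elim=> [|N [M IHN]]; first by exists 0%N.
have [L fL] := f_lser N; exists (M + `|L|)%N => j; rewrite ltnS leq_eqVlt.
by case/orP=> [/eqP -> | ltjN] n ltn; [apply: fL | apply: IHN]; lia.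
Qed.

Section HbarAdicModules.
Variables (K : fieldType) (V0 : lmodType K).

Definition hbarX (N : nat) : hser K := fun j => if j == N then 1 else 0.

Lemma hscale_hbarX N (x : hvec V0) m :
  hscale (hbarX N) x m = if (N <= m)%N then x (m - N)%N else 0.
Proof.
rewrite /hscale /hbarX; case: leqP => [leNm | ltmN].
- rewrite (bigD1 (Ordinal (leNm : N < m.+1)%N)) //= eqxx scale1r big1 ?addr0 //.
  by move=> i neq_iN; rewrite ifF ?scale0r //; apply: contraNF neq_iN => /eqP ?; apply/eqP/val_inj.
- by rewrite big1 // => i _; rewrite ifF ?scale0r //; have := ltn_ord i; lia.
Qed.

Lemma modhP N (x : hvec V0) :
  modh N x <-> exists y, x = hscale (hbarX N) y.
Proof.
split=> [x0 | [y ->] m ltmN]; last by rewrite hscale_hbarX leqNgt ltmN.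
exists (fun m => x (m + N)%N); apply: functional_extensionality => m.
by rewrite hscale_hbarX; case: leqP => [/subnK -> | /x0].
Qed.

Variables (vac : hvec V0) (Y : vop V0).
Hypothesis HV : hNVA vac Y.

Lemma modhY N (x : hvec V0) n w : modh N x -> modh N (Y x n w).
Proof.
have [_ [Yscale _]] := HV.
by case/modhP=> y ->; apply/modhP; exists (Y y n w); rewrite Yscale.
Qed.

Lemma Y_hzero u n : Y u n (hzero V0) = hzero V0.
Proof.
have [_ [_ [Ylin _]]] := HV; have [_ Yscale] := Ylin u n.
have hzeroE x : hscale (fun=> 0) x = hzero V0.
  by apply: functional_extensionality => m; rewrite /hscale big1 // => i _; rewrite scale0r.
by rewrite -(hzeroE (hzero V0)) Yscale hzeroE.
Qed.

End HbarAdicModules.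

Section VertexOperatorCoefficients.
Variables (K : fieldType) (V0 : lmodType K) (vac : hvec V0) (Y : vop V0).
Hypothesis HV : hNVA vac Y.
Implicit Types (u v w : hvec V0) (c : nat -> hvec V0) (f g beta : lser K).

Lemma beta_term_vac_eq0 beta u v a b : a < 0 ->
  beta_term beta Y u v vac a b = hzero V0.
Proof.
have [_ [_ [_ [_ [_ [Yvac _]]]]]] := HV.
move=> a_lt0; apply: functional_extensionality => m.
apply: hsumZ_eq0 => i; apply: hsumZ_eq0 => l.
rewrite /hscale big1 // => j _; rewrite /expc; case: ifP => [i_ge0|]; last by rewrite scale0r.
by rewrite (proj2 (Yvac u)) ?(Y_hzero HV) ?scaler0 //; lia.
Qed.

Lemma g_x2mx1_eq0 g w a b : a < 0 -> g_x2mx1 g w a b = hzero V0.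
Proof.
move=> a_lt0; apply: functional_extensionality => m.
by rewrite /g_x2mx1 /hscale big1 // => j _; rewrite /expc ifF ?scale0r //; lia.
Qed.

Lemma f_x1mx2_x2_0 f w a : f_x1mx2 f w a 0 = hscale (lcoef f a) w.
Proof.
apply: functional_extensionality => m; apply: eq_bigr => j _.
by rewrite /expc /lcoef /= addr0 zbin0 /sgnz /= !mulr1.
Qed.

Lemma delta_term_vac c (n : nat) : delta_term Y c vac (- n%:Z - 1) 0 = c n.
Proof.
have [_ [_ [_ [_ [_ [Yvac _]]]]]] := HV.
apply: functional_extensionality => m; rewrite /delta_term /hsumN (@hsumZE _ _ _ n).
- have -> : - (- n%:Z - 1) - 1 = n by lia.
  rewrite /hsum_window big_ord_recr /= big1 ?add0r.
  - have -> : (n.*2)%:Z - n%:Z = n by rewrite -addnn; lia.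
    have -> : - (- n%:Z - 1) - 0 - n%:Z - 2 = -1 by lia.
    by rewrite /kscale /= binn scale1r (proj1 (Yvac (c n))).
  - move=> i _; case E: (i%:Z - n%:Z) => [r|r] //=.
    rewrite /kscale (proj2 (Yvac (c r))) ?scaler0 //.
    by move: (ltn_ord i) E; move: (nat_of_ord i) => j; rewrite -addnn; lia.
- have -> : - (- n%:Z - 1) - 1 = n by lia.
  by move=> [r|r] ltnr //=; rewrite /kscale /= bin_small // mulr0z scale0r.
Qed.

End VertexOperatorCoefficients.

Section ExpansionDefects.
Variables (K : fieldType) (V0 : lmodType K) (vac : hvec V0) (Y : vop V0).
Hypothesis HV : hNVA vac Y.
Implicit Types (w : hvec V0) (c : nat -> hvec V0) (f : lser K).

Lemma f_expansions_diffE f w m a b :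
  f_x1mx2 f w a b m - f_mx2x1 f w a b m =
  \sum_(j < m.+1) (coef_pow12 K a b - coef_pow21 K a b) *: (f j (a + b) *: w (m - j)%N).
Proof.
rewrite /f_x1mx2 /f_mx2x1 /hscale -sumrB; apply: eq_bigr => j _.
rewrite -scalerBl scalerA /expc /coef_pow12 /coef_pow21 /sgnz /= (addrC b a).
by congr (_ *: _); case: (0 <= b); case: (0 <= a); rewrite /=; ring.
Qed.

Lemma mulX12_f_expansions_diff_eq0 f w N M k m a b :
    (forall j, (j < N)%N -> forall n : int, n < - M%:Z -> f j n = 0) ->
    (M <= k)%N -> (m < N)%N ->
  mulX12 k (fun a b => f_x1mx2 f w a b m - f_mx2x1 f w a b m) a b = 0.
Proof.
move=> f_low leMk ltmN.
rewrite (eq_mulX12 _ _ _ (f_expansions_diffE f w m)) mulX12_sum; apply: big1 => j _.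
rewrite (@mulX12_scale_shift _ _ _ (fun a b => coef_pow12 K a b - coef_pow21 K a b)
           (fun s => f j s *: w (m - j)%N)) //.
rewrite mulX12D mulX12N (mulX12_fixed _ _ _ (@diffX12_coef_pow12 K)).
rewrite (mulX12_fixed _ _ _ (@diffX12_coef_pow21 K)).
have [ab_ge0 | ab_lt0] := lerP 0 (a + b); first by rewrite coef_pow12_21 // subrr scale0r.
by rewrite f_low ?scale0r ?scaler0 //; [have := ltn_ord j | ]; lia.
Qed.

Lemma mulX12_delta_term_eq0 c w N r0 k m a b :
    (forall r, (r0 <= r)%N -> modh N (c r)) -> (r0 <= k)%N -> (m < N)%N ->
  mulX12 k (fun a b => delta_term Y c w a b m) a b = 0.
Proof.
move=> c_small lerk ltmN.
pose term (a b : int) (i : int) : hvec V0 := match i with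
  | Posz r => kscale (zbin (- a - 1) r)%:~R (Y (c r) (- a - b - r%:Z - 2) w)
  | Negz _ => hzero V0 end.
have termE a' b' : delta_term Y c w a' b' m = hsum_window (term a' b') r0 m.
  rewrite /delta_term /hsumN (@hsumZE _ _ _ r0) // => [[r|r]] // ltr0r.
  by rewrite /kscale /= (modhY HV _ _ (c_small r _)) ?scaler0 //; lia.
rewrite (eq_mulX12 _ _ _ termE) mulX12_sum; apply: big1 => i _.
case: (i%:Z - r0%:Z) => [r|r]; last exact: mulX12_eq0.
rewrite (@mulX12_scale_shift _ _ _ (coef_delta K r)
           (fun s => Y (c r) (- s - r%:Z - 2) w m)); last first.
  by move=> a' b'; rewrite /kscale /coef_delta; congr (_ *: Y _ _ _ _); lia.
have [ltrk | lekr] := ltnP r k.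
- by rewrite (mulX12_lowering_eq0 _ _ (@diffX12_coef_delta0 K)
                (@diffX12_coef_deltaS K)) // scale0r.
- by rewrite (modhY HV _ _ (c_small r _)) ?scaler0 //; lia.
Qed.

End ExpansionDefects.

Section CommutatorIdentity.
Variables (K : fieldType) (V0 : lmodType K) (vac : hvec V0) (Y : vop V0).
Hypothesis HV : hNVA vac Y.
Variables (u v : hvec V0) (c : nat -> hvec V0) (beta f g : lser K).
Hypothesis Hid : forall (w : hvec V0) (a b : int),
  hsub (YuYv Y u v w a b) (beta_term beta Y u v w a b) =
  hadd (hadd (f_x1mx2 f w a b) (g_x2mx1 g w a b)) (delta_term Y c w a b).

Lemma Yu_singular_coef (n : nat) :
  Y u n%:Z v = hadd (hscale (lcoef f (- n%:Z - 1)) vac) (c n).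
Proof.
have [_ [_ [_ [_ [_ [Yvac _]]]]]] := HV.
have := Hid vac (- n%:Z - 1) 0.
rewrite beta_term_vac_eq0 ?g_x2mx1_eq0 ?f_x1mx2_x2_0 ?delta_term_vac //; try lia.
rewrite /YuYv (_ : - (- n%:Z - 1) - 1 = n); last by lia.
rewrite (proj1 (Yvac v)) => coefE; apply: functional_extensionality => m.
by have := congr1 (fun x => x m) coefE; rewrite /hsub /hadd /hzero subr0 addr0.
Qed.

Lemma YuYv_sim (N : nat) : (exists r0, forall r, (r0 <= r)%N -> modh N (c r)) ->
  (exists M : nat, forall j, (j < N)%N -> forall n : int, n < - M%:Z -> f j n = 0) ->
  exists k : nat, forall (w : hvec V0) (a b : int),
    hcong N (mul_x12 k (YuYv Y u v w) a b)
            (mul_x12 k (fun a' b' => hadd (hadd (beta_term beta Y u v w a' b')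
                                                (f_mx2x1 f w a' b'))
                                          (g_x2mx1 g w a' b')) a b).
Proof.
move=> [r0 c_small] [M f_low]; exists (r0 + M)%N => w a b m ltmN.
have splitE a' b' : YuYv Y u v w a' b' m =
    hadd (hadd (beta_term beta Y u v w a' b') (f_mx2x1 f w a' b')) (g_x2mx1 g w a' b') m
    + ((f_x1mx2 f w a' b' m - f_mx2x1 f w a' b' m) + delta_term Y c w a' b' m).
  have rearrange (x y f12 f21 z d : V0) :
      x - y = f12 + z + d -> x = y + f21 + z + (f12 - f21 + d).
    move=> /eqP; rewrite subr_eq => /eqP ->.
    rewrite [f12 - f21 + d]addrAC addrA [y + f21 + z]addrAC [y + z + f21 + _]addrAC addrK.
    by rewrite [f12 + z]addrC -[z + f12 + d]addrA [_ + y]addrC addrA.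
  by apply: rearrange; move/(congr1 (fun x => x m)): (Hid w a' b').
rewrite !mul_x12E (eq_mulX12 _ _ _ splitE) mulX12D [X in _ + X]mulX12D.
rewrite (mulX12_f_expansions_diff_eq0 _ _ _ f_low) ?leq_addl //.
by rewrite (mulX12_delta_term_eq0 HV _ _ _ c_small) ?leq_addr // !addr0.
Qed.

End CommutatorIdentity.

Local Open Scope complex_scope.

Theorem lemma3p37 (R : realType) (V0 : lmodType R[i])
  (vac : hvec V0) (Y : vop V0) (HV : hNVA vac Y)
  (u v : hvec V0) (c : nat -> hvec V0) (Hc : hlim0 c)
  (beta f g : lser R[i])
  (Hbeta : is_lser beta) (Hf : is_lser f) (Hg : is_lser g)
  (Hid : forall (w : hvec V0) (a b : int),
     hsub (YuYv Y u v w a b) (beta_term beta Y u v w a b) =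
     hadd (hadd (f_x1mx2 f w a b) (g_x2mx1 g w a b)) (delta_term Y c w a b)) :
  (forall N : nat, exists k : nat, forall (w : hvec V0) (a b : int),
     hcong N (mul_x12 k (YuYv Y u v w) a b)
             (mul_x12 k (fun a' b' => hadd (hadd (beta_term beta Y u v w a' b')
                                                 (f_mx2x1 f w a' b'))
                                           (g_x2mx1 g w a' b')) a b)) /\
  (forall n : nat, Y u n%:Z v = hadd (hscale (lcoef f (- n%:Z - 1)) vac) (c n)).
Proof.
split=> [N | n]; last exact: Yu_singular_coef.
exact: (YuYv_sim HV Hid (Hc N) (is_lser_uniform Hf N)).
Qed.
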